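(* Let $\mathcal{D}_1=\{(z_1,z_2)\in\mathbb{C}^2: 1+|z_1|^2-|z_2|^2>|1+z_1^2-z_2^2|,\ \mathrm{Im}(z_1(1+\overline{z_2}))>0\}$ and $\mathcal{H}=\{(z_1,z_2)\in\mathbb{C}^2:\mathrm{Im}(z_1)>0,\ z_2\notin(-\infty,-1]\cup[1,\infty)\}$. Then $\mathcal{D}_1\subset\mathcal{H}$, and if $(z_1,z_2)\in\mathcal{D}_1$ then $(z_1,0)\in\mathcal{D}_1$. *)

From Stdlib Require Import Reals.
From Coquelicot Require Import Coquelicot.
Open Scope R_scope.
Open Scope C_scope.

Definition D1 (z1 z2 : C) : Prop :=
  (1 + (Cmod z1)^2 - (Cmod z2)^2 > Cmod (1 + z1 * z1 - z2 * z2))%R /\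
  (Im (z1 * (1 + Cconj z2)) > 0)%R.

Definition Hset (z1 z2 : C) : Prop :=
  (Im z1 > 0)%R /\
  ~ (Im z2 = 0 /\ (Re z2 <= -1 \/ 1 <= Re z2))%R.

(** Write z1 = a + i b.  The quantity L = 1 + |z1|^2 - |z2|^2 satisfies
    L^2 - |1 + z1^2 - z2^2|^2 = 4 (b^2 - (Im z2)^2 - (Im (z1 conj z2))^2),
    so on D_1 both Im z2 and Im (z1 conj z2) are smaller than |b| in modulus.
    The second condition of D_1 reads b + Im (z1 conj z2) > 0, which forces
    b > 0; and for real z2 = c one has Im (z1 conj z2) = b c, so |c| < 1.
    For z2 = 0 the identity gives L^2 - |1 + z1^2|^2 = 4 b^2 > 0. *)
From Stdlib Require Import Reals Lra Psatz.
From Coquelicot Require Import Coquelicot.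

Lemma Cmod_lt_iff (w : C) (L : R) :
  (Cmod w < L <-> 0 < L /\ Cmod w ^ 2 < L ^ 2)%R.
Proof.
  pose proof (Cmod_ge_0 w).
  split; [intros; split; nra | intros [? ?]; nra].
Qed.

Lemma D1_gap_identity (z1 z2 : C) :
  ((1 + Cmod z1 ^ 2 - Cmod z2 ^ 2) ^ 2 - Cmod (1 + z1 * z1 - z2 * z2) ^ 2
   = 4 * (Im z1 ^ 2 - Im z2 ^ 2 - Im (z1 * Cconj z2) ^ 2))%R.
Proof.
  rewrite !Cmod2_alt; destruct z1 as [a b], z2 as [c d]; simpl; ring.
Qed.

Lemma Im_mul_1_plus_conj (z1 z2 : C) :
  Im (z1 * (1 + Cconj z2)) = (Im z1 + Im (z1 * Cconj z2))%R.
Proof. destruct z1 as [a b], z2 as [c d]; simpl; ring. Qed.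

Lemma D1_Im_bound {z1 z2 : C} :
  D1 z1 z2 -> (Im z2 ^ 2 + Im (z1 * Cconj z2) ^ 2 < Im z1 ^ 2)%R.
Proof.
  intros [Hmod _].
  apply Cmod_lt_iff in Hmod as [_ Hsq].
  pose proof (D1_gap_identity z1 z2).
  lra.
Qed.

Lemma D1_Im_pos {z1 z2 : C} : D1 z1 z2 -> (0 < Im z1)%R.
Proof.
  intros HD.
  pose proof (D1_Im_bound HD) as Hbound.
  destruct HD as [_ Hpos]; rewrite Im_mul_1_plus_conj in Hpos.
  nra.
Qed.

Lemma D1_not_on_cuts {z1 z2 : C} :
  D1 z1 z2 -> ~ (Im z2 = 0 /\ (Re z2 <= -1 \/ 1 <= Re z2))%R.
Proof.
  intros HD [Hd Hc].
  pose proof (D1_Im_bound HD) as Hbound.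
  pose proof (D1_Im_pos HD) as Hb.
  assert (HIm : Im (z1 * Cconj z2) = (Im z1 * Re z2)%R).
  { destruct z1 as [a b], z2 as [c d]; simpl in *; subst d; ring. }
  rewrite HIm in Hbound.
  assert (Hc2 : (1 <= Re z2 ^ 2)%R) by (destruct Hc; nra).
  nra.
Qed.

Lemma D1_Hset {z1 z2 : C} : D1 z1 z2 -> Hset z1 z2.
Proof.
  intros HD; split; [exact (D1_Im_pos HD) | exact (D1_not_on_cuts HD)].
Qed.

Lemma D1_zero_of_Im_pos {z1 : C} : (0 < Im z1)%R -> D1 z1 (RtoC 0).
Proof.
  intros Hb.
  assert (Hcross : Im (z1 * Cconj (RtoC 0)) = 0%R)
    by (destruct z1 as [a b]; simpl; ring).
  pose proof (D1_gap_identity z1 (RtoC 0)) as Hgap.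
  rewrite Hcross, Cmod_0 in Hgap; change (Im (RtoC 0)) with 0%R in Hgap.
  split.
  - apply Cmod_lt_iff.
    pose proof (Cmod_ge_0 z1).
    rewrite Cmod_0; split; nra.
  - rewrite Im_mul_1_plus_conj, Hcross; lra.
Qed.

Theorem lemma3p1 :
  (forall z1 z2 : C, D1 z1 z2 -> Hset z1 z2) /\
  (forall z1 z2 : C, D1 z1 z2 -> D1 z1 (RtoC 0)).
Proof.
  split; intros z1 z2 HD.
  - exact (D1_Hset HD).
  - exact (D1_zero_of_Im_pos (D1_Im_pos HD)).
Qed.
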